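(* Let $H\le G$ be finite groups, $Y$ an irreducible unitary representation of $H$, $Y^{\uparrow}=\bigoplus_t t\otimes Y$ the induced unitary representation, $V$ a $G$-subrepresentation of $Y^{\uparrow}$, and $E$ the orthogonal projection onto $e\otimes Y$. Then for every unit vector $\psi\in V$, $$\langle\psi|E\psi\rangle\le\frac{\dim V}{\dim Y^{\uparrow}}.$$
   Context: $Y^{\uparrow}=\mathbb{C}G\otimes_{\mathbb{C}H}Y$ with $t$ ranging over left coset representatives of $H$, equipped with the inner product making the subspaces $t\otimes Y$ pairwise orthogonal, each with the inner product of $Y$; it is then a unitary representation of $G$. *)

From HB Require Import structures.
From mathcomp Require Import all_boot all_order all_algebra all_fingroup.
From mathcomp Require Import mxrepresentation.
Set Implicit Arguments. Unset Strict Implicit. Unset Printing Implicit Defensive.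
Import Order.TTheory GRing.Theory Num.Theory.
Local Open Scope ring_scope.
Local Open Scope group_scope.

(* Conventions: a (finite dim.) representation rho of a group G on C^n is a
   family of matrices with mx_repr G rho (rho 1 = 1, rho (x*y) = rho x *m rho y),
   read as a LEFT action on column vectors  v |-> rho g v.  We encode vectors
   as row vectors, so the action reads  v |-> v *m (rho g)^T. *)

Section Defs.
Variable C : numClosedFieldType.

Definition adjmx m n (A : 'M[C]_(m, n)) : 'M[C]_(n, m) := (map_mx Num.conj A)^T.

Definition hdot m n (u v : 'M[C]_(m, n)) : C :=
  (\sum_(i < m) \sum_(j < n) (Num.conj (u i j)) * v i j)%R.

Variable gT : finGroupType.

Definition unitary_rep (G : {set gT}) n (rho : gT -> 'M[C]_n) :=
  mx_repr G rho /\ {in G, forall g, (rho g *m adjmx (rho g) = 1%:M)%R}.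

Definition linvariant (G : {set gT}) n (rho : gT -> 'M[C]_n) m (U : 'M[C]_(m, n)) :=
  {in G, forall g, (U *m (rho g)^T <= U)%MS}.

Definition irreducible_rep (G : {set gT}) n (rho : gT -> 'M[C]_n) :=
  (0 < n)%N /\
  forall U : 'M[C]_n, linvariant G rho U -> (U == (0 : 'M[C]_n))%MS || row_full U.

Definition left_transversal (G H : {set gT}) k (t : 'I_k -> gT) :=
  (forall i, t i \in G) /\ (forall g, g \in G -> exists! i, g \in t i *: H).

(* Induced representation Y^up = (+)_i t_i (x) Y, a vector being encoded as a
   k x n matrix whose i-th row is the Y-component at t_i.  For g in G,
   g (t_i (x) y) = t_j (x) (h y) where g t_i = t_j h, i.e. h = t_j^-1 g t_i \in H. *)
Definition ind_act (H : {set gT}) k n (t : 'I_k -> gT) (rY : gT -> 'M[C]_n)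
    (g : gT) (M : 'M[C]_(k, n)) : 'M[C]_(k, n) :=
  (\matrix_(j, c)
     \sum_(i < k)
        (if ((t j)^-1 * g * t i)%g \in H
         then (row i M *m (rY ((t j)^-1 * g * t i)%g)^T) 0 c else 0))%R.

Definition ind_subrep (G H : {set gT}) k n (t : 'I_k -> gT) (rY : gT -> 'M[C]_n)
    m (U : 'M[C]_(m, k * n)) :=
  forall g, g \in G -> forall M : 'M[C]_(k, n),
    (mxvec M <= U)%MS -> (mxvec (ind_act H t rY g M) <= U)%MS.

Definition block_proj k n (i0 : 'I_k) (M : 'M[C]_(k, n)) : 'M[C]_(k, n) :=
  (\matrix_(i, c) (if i == i0 then M i c else 0))%R.

End Defs.

From HB Require Import structures.
From mathcomp Require Import all_boot all_order all_algebra all_fingroup.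
From mathcomp Require Import mxrepresentation spectral.
Import Order.TTheory GRing.Theory Num.Theory.
Local Open Scope ring_scope.
Set Implicit Arguments. Unset Strict Implicit.

(* Let E be the orthogonal projection of Y^up = (+)_i t_i (x) Y onto one block
   t_i0 (x) Y, and P the orthogonal projection onto the G-subrepresentation V
   (the row space of U in the statement).
   The bound <psi|E psi> <= dim V / dim Y^up for unit psi in V follows from
   E P E = lam E with lam = dim V / dim Y^up, proved as follows.
   - Coordinates: a vector of Y^up is a k x n matrix, flattened by mxvec, and
     g acts by right multiplication with a block-monomial matrix indmx g,
     which is unitary because the blocks of Y are.
   - P is a Hermitian idempotent of trace dim V, built from a Gram-Schmidt
     basis of V; it commutes with every unitary matrix stabilizing V, hence
     with every indmx g.
   - Commuting with indmx g relates the diagonal blocks of P: the block at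
     t_i0 commutes with Y(H), hence is a scalar lam by Schur's lemma, and all
     diagonal blocks are equal, so tr P = lam * k * n.
   - For Hermitian idempotents P, E with E P E = lam E, lam > 0, and psi in
     the range of P, one has <psi|E psi> <= lam |psi|^2, since P E P has
     spectrum in {0, lam}. *)

Section MxvecIndex.
Variables k n : nat.

Lemma sum_mxvec_index (S : nmodType) (F : 'I_(k * n) -> S) :
  \sum_a F a = \sum_i \sum_j F (mxvec_index i j).
Proof.
rewrite (reindex _ (curry_mxvec_bij k n)) /= pair_bigA /=.
by apply: eq_bigr => -[i j].
Qed.

Definition mxvec_unindex (a : 'I_(k * n)) : 'I_k * 'I_n :=
  enum_val (cast_ord (esym (mxvec_cast k n)) a).

Lemma mxvec_indexK i j : mxvec_unindex (mxvec_index i j) = (i, j).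
Proof. by rewrite /mxvec_unindex /mxvec_index cast_ordK enum_rankK. Qed.

Lemma eq_mxvec_index i j i' j' :
  (mxvec_index i j == mxvec_index i' j' :> 'I_(k * n)) = (i == i') && (j == j').
Proof.
apply/eqP/andP => [E|[/eqP-> /eqP->]] //.
by have := f_equal mxvec_unindex E; rewrite !mxvec_indexK => -[-> ->].
Qed.

Definition diag_block (R : Type) (P : 'M[R]_(k * n)) (i : 'I_k) : 'M[R]_n :=
  \matrix_(c, d) P (mxvec_index i c) (mxvec_index i d).

End MxvecIndex.

Section Adjoint.
Variable C : numClosedFieldType.

Lemma adjmxE m p (A : 'M[C]_(m, p)) i j : adjmx A i j = (A j i)^*.
Proof. by rewrite !mxE. Qed.

Lemma adjmxM m p q (A : 'M[C]_(m, p)) (B : 'M[C]_(p, q)) :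
  adjmx (A *m B) = adjmx B *m adjmx A.
Proof.
apply/matrixP => i j; rewrite !mxE rmorph_sum; apply: eq_bigr => l _.
by rewrite !mxE rmorphM mulrC.
Qed.

Lemma adjmxK m p (A : 'M[C]_(m, p)) : adjmx (adjmx A) = A.
Proof. by apply/matrixP => i j; rewrite !mxE conjCK. Qed.

Definition sqnorm p (v : 'rV[C]_p) : C := (v *m adjmx v) 0 0.

Lemma sqnorm_ge0 p (v : 'rV[C]_p) : 0 <= sqnorm v.
Proof.
by rewrite /sqnorm mxE; apply: sumr_ge0 => a _; rewrite adjmxE mul_conjC_ge0.
Qed.

(* If P, D are Hermitian, P idempotent and D P D = lam D with lam > 0, then
   <v|D v> <= lam |v|^2 on the range of P.  Indeed X := P D P satisfies
   X^2 = lam X, so Y := lam - X satisfies Y^2 = lam Y, and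
   lam <v|Y v> = |v Y|^2 >= 0. *)
Lemma hermitian_idempotent_bound N (P D : 'M[C]_N) (v : 'rV[C]_N) lam :
    P *m P = P -> adjmx P = P -> adjmx D = D -> D *m P *m D = lam *: D ->
    0 < lam -> v *m P = v ->
  (v *m D *m adjmx v) 0 0 <= lam * sqnorm v.
Proof.
move=> PP Padj Dadj DPD lam_gt0 vP.
have Pv : P *m adjmx v = adjmx v by rewrite -{1}Padj -adjmxM vP.
set X := P *m D *m P.
have XX : X *m X = lam *: X.
  have -> : X *m X = P *m (D *m P *m D) *m P.
    by rewrite /X !mulmxA -(mulmxA (P *m D) P P) PP.
  by rewrite DPD -scalemxAr -scalemxAl.
have Xadj : adjmx X = X by rewrite /X !adjmxM Padj Dadj mulmxA.
have vX : (v *m X *m adjmx v) 0 0 = (v *m D *m adjmx v) 0 0.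
  by rewrite /X !mulmxA vP -(mulmxA _ P) Pv.
clearbody X; set Y := lam%:M - X.
have lamC : lam^* = lam by apply: conj_Creal; apply: gtr0_real.
have Yadj : adjmx Y = Y.
  apply/matrixP => a b; rewrite /Y !mxE rmorphB /= eq_sym.
  rewrite rmorphMn -[in RHS]Xadj adjmxE; congr (_ *+ _ - _); exact: lamC.
have YY : Y *m Y = lam *: Y.
  rewrite /Y mulmxBl !mulmxBr XX !mul_scalar_mx mul_mx_scalar scalerBr.
  by rewrite subrr subr0.
have vY : (v *m Y *m adjmx v) 0 0 = lam * sqnorm v - (v *m D *m adjmx v) 0 0.
  rewrite /Y mulmxBr mulmxBl mul_mx_scalar -scalemxAl -vX.
  by rewrite [in LHS]mxE [X in _ + X = _]mxE [X in X + _ = _]mxE.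
have vYnorm : sqnorm (v *m Y) = lam * (v *m Y *m adjmx v) 0 0.
  by rewrite /sqnorm adjmxM Yadj !mulmxA -(mulmxA v) YY -scalemxAr -scalemxAl mxE.
by have := sqnorm_ge0 (v *m Y); rewrite vYnorm pmulr_rge0 // vY subr_ge0.
Qed.

End Adjoint.

Section OrthoProjection.
Variables (C : numClosedFieldType) (N m : nat) (U : 'M[C]_(m, N)).

Definition ortho_basis := schmidt (row_base U).

Definition orthoproj : 'M[C]_N := adjmx ortho_basis *m ortho_basis.

Lemma ortho_basis_unitary : ortho_basis *m adjmx ortho_basis = 1%:M.
Proof.
have /unitarymxP := schmidt_unitarymx (row_base U) (rank_leq_col U).
by rewrite -/ortho_basis => <-; congr (_ *m _); apply/matrixP => i j; rewrite !mxE.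
Qed.

Lemma eqmx_ortho_basis : (ortho_basis :=: U)%MS.
Proof. exact: eqmx_trans (eqmx_schmidt_free (row_base_free U)) (eq_row_base U). Qed.

Lemma orthoproj_fix (v : 'rV[C]_N) : (v <= U)%MS -> v *m orthoproj = v.
Proof.
rewrite -eqmx_ortho_basis => /submxP[w ->].
by rewrite mulmxA -(mulmxA w) ortho_basis_unitary mulmx1.
Qed.

Lemma orthoproj_adj : adjmx orthoproj = orthoproj.
Proof. by rewrite adjmxM adjmxK. Qed.

Lemma orthoproj_idem : orthoproj *m orthoproj = orthoproj.
Proof. by rewrite mulmxA -(mulmxA _ ortho_basis) ortho_basis_unitary mulmx1. Qed.

Lemma mxtrace_orthoproj : \tr orthoproj = (\rank U)%:R.
Proof. by rewrite mxtrace_mulC ortho_basis_unitary mxtrace1. Qed.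

(* A unitary R stabilizing U maps the orthonormal basis Q to A Q with A
   unitary, so R^* P R = Q^* A^* A Q = P. *)
Lemma orthoproj_comm (R : 'M[C]_N) :
  R *m adjmx R = 1%:M -> (U *m R <= U)%MS -> orthoproj *m R = R *m orthoproj.
Proof.
move=> Runit UR; set Q := ortho_basis.
have QR : (Q *m R <= Q)%MS by rewrite (eqmxMr R eqmx_ortho_basis) eqmx_ortho_basis.
set A := Q *m R *m pinvmx Q.
have AQ : A *m Q = Q *m R by rewrite mulmxKpV.
have Aunit : A *m adjmx A = 1%:M.
  have : (A *m Q) *m adjmx (A *m Q) = 1%:M.
    by rewrite AQ adjmxM mulmxA -(mulmxA Q) Runit mulmx1 ortho_basis_unitary.
  by rewrite adjmxM mulmxA -(mulmxA A) ortho_basis_unitary mulmx1.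
have conjP : adjmx R *m orthoproj *m R = orthoproj.
  rewrite /orthoproj mulmxA -adjmxM -mulmxA -AQ adjmxM -mulmxA (mulmxA (adjmx A)).
  by rewrite (mulmx1C Aunit) mul1mx.
by rewrite -{2}conjP !mulmxA Runit mul1mx.
Qed.

End OrthoProjection.

(* Schur's lemma: a matrix commuting with an irreducible representation over
   an algebraically closed field is scalar, since any of its eigenspaces is
   a nonzero invariant subspace. *)
Lemma irr_commutant_scalar (C : numClosedFieldType) (gT : finGroupType)
    (H : {set gT}) n (rho : gT -> 'M[C]_n) (K : 'M[C]_n) :
    irreducible_rep H rho ->
    {in H, forall h, K *m (rho h)^T = (rho h)^T *m K} ->
  exists lam, K = lam%:M.
Proof.
case=> n_gt0 irr Kcomm; have [lam lamK] := eigenvalue_closed K n_gt0.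
exists lam; set E := eigenspace K lam.
have EK : E *m K = lam *: E by apply/eigenspaceP.
have Einv : linvariant H rho E.
  by move=> h hH; apply/eigenspaceP; rewrite -mulmxA -Kcomm // mulmxA EK -scalemxAl.
case/orP: (irr E Einv) => [/andP[/submx0null E0 _]|].
  by move: lamK; rewrite /eigenvalue -/E E0 eqxx.
by rewrite -sub1mx => /eigenspaceP; rewrite mul1mx scalemx1.
Qed.

Section Transversal.
Variables (gT : finGroupType) (G H : {group gT}) (k : nat) (t : 'I_k -> gT).
Hypothesis t_transversal : left_transversal G H t.

Lemma transversal_mem i : t i \in G.
Proof. by case: t_transversal. Qed.

Lemma transversal_inj i j : ((t i)^-1 * t j \in H)%g -> i = j.
Proof.
move=> tij; case: t_transversal => _ /(_ _ (transversal_mem j)) [i1 [_ uniq_j]].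
rewrite -(uniq_j i) ?mem_lcoset //.
by rewrite -(uniq_j j) // mem_lcoset mulVg group1.
Qed.

Lemma transversal_target g i : g \in G -> exists j, ((t j)^-1 * g * t i \in H)%g.
Proof.
move=> gG; case: t_transversal => _ /(_ (g * t i)%g).
rewrite groupM ?transversal_mem // => /(_ isT) [j [gtj _]].
by exists j; rewrite -mulgA -mem_lcoset.
Qed.

Lemma transversal_target_uniq g i j j' :
  ((t j)^-1 * g * t i \in H)%g -> ((t j')^-1 * g * t i \in H)%g -> j = j'.
Proof.
move=> hj hj'; apply: transversal_inj.
have := groupM hj (groupVr hj').
by rewrite invMg invMg invgK !mulgA mulgK -(mulgA _ g) mulgV mulg1.
Qed.

Lemma transversal_source_uniq g i i' j :
  ((t j)^-1 * g * t i \in H)%g -> ((t j)^-1 * g * t i' \in H)%g -> i = i'.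
Proof.
move=> hi hi'; apply: transversal_inj.
have cancel (a b c : gT) : ((a * b)^-1 * (a * c) = b^-1 * c)%g.
  by rewrite invMg -mulgA mulKg.
by have := groupM (groupVr hi) hi'; rewrite -!(mulgA _ g) !cancel.
Qed.

End Transversal.

Section InducedMatrix.
Variables (C : numClosedFieldType) (gT : finGroupType) (G H : {group gT}).
Variables (n k : nat) (rY : gT -> 'M[C]_n) (t : 'I_k -> gT).
Local Notation ix := (@mxvec_index k n).

(* Coordinate (j, c) of g (t_i (x) e_d), which is t_j (x) Y(h) e_d when
   g t_i = t_j h with h in H. *)
Definition indcoef (g : gT) i (d : 'I_n) j (c : 'I_n) : C :=
  if ((t j)^-1 * g * t i)%g \in H then rY ((t j)^-1 * g * t i)%g c d else 0.

Definition indmx (g : gT) : 'M[C]_(k * n) :=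
  \matrix_(a, b) indcoef g (mxvec_unindex a).1 (mxvec_unindex a).2
                           (mxvec_unindex b).1 (mxvec_unindex b).2.

Lemma indmxE g i d j c : indmx g (ix i d) (ix j c) = indcoef g i d j c.
Proof. by rewrite mxE !mxvec_indexK. Qed.

Lemma mul_mxvec_indmx g M : mxvec M *m indmx g = mxvec (ind_act H t rY g M).
Proof.
apply/rowP => b; case/mxvec_indexP: b => j c.
rewrite mxvecE !mxE sum_mxvec_index; apply: eq_bigr => i _.
rewrite /indcoef; case: ifP => tgtH.
  by rewrite !mxE; apply: eq_bigr => d _; rewrite mxvecE indmxE /indcoef tgtH !mxE.
by apply: big1 => d _; rewrite indmxE /indcoef tgtH mulr0.
Qed.

Hypothesis t_transversal : left_transversal G H t.

Section BlockMove.
Variables (g : gT) (i j : 'I_k) (h : gT).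
Hypotheses (ghE : ((t j)^-1 * g * t i)%g = h) (hH : h \in H).

Lemma indcoef_col i' d c : indcoef g i' d j c = if i' == i then rY h c d else 0.
Proof.
rewrite /indcoef; have [->|ne_i'] := eqVneq i' i; first by rewrite ghE hH.
case: ifP => // hi'; have hi : ((t j)^-1 * g * t i \in H)%g by rewrite ghE.
by move: ne_i'; rewrite (transversal_source_uniq t_transversal hi' hi) eqxx.
Qed.

Lemma indcoef_row d j' c : indcoef g i d j' c = if j' == j then rY h c d else 0.
Proof.
rewrite /indcoef; have [->|ne_j'] := eqVneq j' j; first by rewrite ghE hH.
case: ifP => // hj'; have hj : ((t j)^-1 * g * t i \in H)%g by rewrite ghE.
by move: ne_j'; rewrite (transversal_target_uniq t_transversal hj' hj) eqxx.
Qed.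

Lemma mul_indmx_col p (M : 'M[C]_(p, k * n)) a c :
  (M *m indmx g) a (ix j c) = \sum_d M a (ix i d) * rY h c d.
Proof.
rewrite mxE sum_mxvec_index (bigD1 i) //= [X in _ + X]big1 ?addr0 => [|i' ne_i'].
  by apply: eq_bigr => d _; rewrite indmxE indcoef_col eqxx.
by apply: big1 => d _; rewrite indmxE indcoef_col (negbTE ne_i') mulr0.
Qed.

Lemma mul_indmx_row p (M : 'M[C]_(k * n, p)) d b :
  (indmx g *m M) (ix i d) b = \sum_c rY h c d * M (ix j c) b.
Proof.
rewrite mxE sum_mxvec_index (bigD1 j) //= [X in _ + X]big1 ?addr0 => [|j' ne_j'].
  by apply: eq_bigr => c _; rewrite indmxE indcoef_row eqxx.
by apply: big1 => c _; rewrite indmxE indcoef_row (negbTE ne_j') mul0r.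
Qed.

End BlockMove.

Hypothesis rY_unitary : unitary_rep H rY.

(* indmx g is block-monomial with unitary blocks, hence unitary. *)
Lemma indmx_unitary g : g \in G -> indmx g *m adjmx (indmx g) = 1%:M.
Proof.
move=> gG; apply/matrixP => a b.
case/mxvec_indexP: a => i d; case/mxvec_indexP: b => i' d'.
have [j hH] := transversal_target t_transversal i gG.
rewrite (mul_indmx_row (erefl _) hH) mxE eq_mxvec_index.
have rYunit : adjmx (rY ((t j)^-1 * g * t i)%g) *m rY ((t j)^-1 * g * t i)%g = 1%:M.
  by apply: mulmx1C; case: rY_unitary => _ ->.
under eq_bigr => c _ do rewrite adjmxE indmxE (indcoef_col (erefl _) hH).
have [_|_] /= := eqVneq i' i; last by apply: big1 => c _; rewrite rmorph0 mulr0.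
move/matrixP: rYunit => /(_ d' d); rewrite !mxE eq_sym => <-.
by apply: eq_bigr => c _; rewrite adjmxE mulrC.
Qed.

Lemma diag_block_intertwine (P : 'M[C]_(k * n)) g i j h :
    ((t j)^-1 * g * t i)%g = h -> h \in H -> P *m indmx g = indmx g *m P ->
  diag_block P i *m (rY h)^T = (rY h)^T *m diag_block P j.
Proof.
move=> ghE hH /matrixP Pcomm; apply/matrixP => d c; rewrite !mxE.
transitivity (\sum_e P (ix i d) (ix i e) * rY h c e).
  by apply: eq_bigr => e _; rewrite !mxE.
rewrite -(mul_indmx_col ghE hH) Pcomm (mul_indmx_row ghE hH).
by apply: eq_bigr => e _; rewrite !mxE.
Qed.

End InducedMatrix.

Section BlockProjection.
Variables (C : numClosedFieldType) (k n : nat) (i0 : 'I_k).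
Local Notation ix := (@mxvec_index k n).

Definition block_projmx : 'M[C]_(k * n) :=
  \matrix_(a, b) ((a == b) && ((mxvec_unindex a).1 == i0))%:R.

Lemma mul_block_projmx_l p (M : 'M[C]_(k * n, p)) a b :
  (block_projmx *m M) a b = if (mxvec_unindex a).1 == i0 then M a b else 0.
Proof.
rewrite mxE (bigD1 a) //= big1 ?addr0 => [|a' ne_a'].
  by rewrite mxE eqxx /=; case: ifP; rewrite ?mul1r ?mul0r.
by rewrite mxE eq_sym (negbTE ne_a') mul0r.
Qed.

Lemma mul_block_projmx_r p (M : 'M[C]_(p, k * n)) a b :
  (M *m block_projmx) a b = if (mxvec_unindex b).1 == i0 then M a b else 0.
Proof.
rewrite mxE (bigD1 b) //= big1 ?addr0 => [|b' ne_b'].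
  by rewrite mxE eqxx /=; case: ifP; rewrite ?mulr1 ?mulr0.
by rewrite mxE (negbTE ne_b') mulr0.
Qed.

Lemma block_projmx_adj : adjmx block_projmx = block_projmx.
Proof.
apply/matrixP => a b; rewrite !mxE eq_sym conjC_nat.
by have [->|] := eqVneq b a.
Qed.

Lemma block_compression (P : 'M[C]_(k * n)) lam :
  diag_block P i0 = lam%:M ->
  block_projmx *m P *m block_projmx = lam *: block_projmx.
Proof.
move=> /matrixP Plam; apply/matrixP => a b.
rewrite mul_block_projmx_r mul_block_projmx_l !mxE.
case/mxvec_indexP: a => i c; case/mxvec_indexP: b => j d.
rewrite !mxvec_indexK /= eq_mxvec_index.
have [->|ne_i] := eqVneq i i0; last by rewrite andbF mulr0; case: ifP.
have [->|ne_j] := eqVneq j i0; last by rewrite /= mulr0.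
have := Plam c d; rewrite !mxE => ->.
by rewrite /= andbT; case: eqP; rewrite ?mulr1 ?mulr0.
Qed.

Lemma hdot_sqnorm (psi : 'M[C]_(k, n)) : hdot psi psi = sqnorm (mxvec psi).
Proof.
rewrite /hdot /sqnorm mxE sum_mxvec_index; apply: eq_bigr => i _.
by apply: eq_bigr => c _; rewrite adjmxE mxvecE mulrC.
Qed.

Lemma hdot_block_proj (psi : 'M[C]_(k, n)) :
  hdot psi (block_proj i0 psi) =
    (mxvec psi *m block_projmx *m adjmx (mxvec psi)) 0 0.
Proof.
rewrite /hdot mxE sum_mxvec_index; apply: eq_bigr => i _; apply: eq_bigr => c _.
rewrite adjmxE mul_block_projmx_r mxvec_indexK mxvecE !mxE /=.
by case: ifP; rewrite ?mulr0 ?mul0r // mulrC.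
Qed.

End BlockProjection.

Section InducedSubrep.
Variables (C : numClosedFieldType) (gT : finGroupType) (G H : {group gT}).
Variables (n k : nat) (rY : gT -> 'M[C]_n) (t : 'I_k -> gT).
Hypotheses (HG : H \subset G) (rY_unitary : unitary_rep H rY).
Hypotheses (rY_irr : irreducible_rep H rY) (t_transversal : left_transversal G H t).
Variables (m : nat) (U : 'M[C]_(m, k * n)).
Hypothesis U_subrep : ind_subrep G H t rY U.
Local Notation P := (orthoproj U).
Local Notation block i := (@diag_block k n C P i).

Lemma subrep_stable g : g \in G -> (U *m indmx H rY t g <= U)%MS.
Proof.
move=> gG; apply/row_subP => i; rewrite row_mul -(vec_mxK (row i U)).
by rewrite mul_mxvec_indmx; apply: U_subrep; rewrite // vec_mxK row_sub.
Qed.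

Lemma orthoproj_comm_indmx g :
  g \in G -> P *m indmx H rY t g = indmx H rY t g *m P.
Proof.
move=> gG; have Runit := indmx_unitary t_transversal rY_unitary gG.
exact: orthoproj_comm Runit (subrep_stable gG).
Qed.

(* All diagonal blocks of P are one and the same scalar: the block at t_i0
   commutes with Y(H) (use g = t_i0 h t_i0^-1) and block i equals block i0
   (use g = t_i0 t_i^-1, which moves block i to block i0 through Y(1)). *)
Lemma diag_block_orthoproj (i0 : 'I_k) : exists lam, forall i, block i = lam%:M.
Proof.
have ti0G := transversal_mem t_transversal i0.
have [lam Plam] : exists lam, block i0 = lam%:M.
  apply: irr_commutant_scalar rY_irr _ => h hH.
  have gG : (t i0 * h * (t i0)^-1 \in G)%g.
    by rewrite !groupM ?groupV // (subsetP HG).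
  have ghE : ((t i0)^-1 * (t i0 * h * (t i0)^-1) * t i0 = h)%g.
    by rewrite !mulgA mulVg mul1g mulgKV.
  by have := diag_block_intertwine t_transversal ghE hH (orthoproj_comm_indmx gG).
exists lam => i; rewrite -Plam.
have gG : (t i0 * (t i)^-1 \in G)%g.
  by rewrite groupM ?groupV ?(transversal_mem t_transversal).
have ghE : ((t i0)^-1 * (t i0 * (t i)^-1) * t i = 1)%g.
  by rewrite mulgA mulVg mul1g mulVg.
have Pcomm := orthoproj_comm_indmx gG.
have := diag_block_intertwine t_transversal ghE (group1 H) Pcomm.
by case: rY_unitary => -[-> _] _; rewrite trmx1 mulmx1 mul1mx.
Qed.

Lemma rank_subrep lam : (forall i, block i = lam%:M) ->
  (\rank U)%:R = lam * (k * n)%:R.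
Proof.
move=> Plam; rewrite -mxtrace_orthoproj /mxtrace sum_mxvec_index.
transitivity (\sum_(i < k) \sum_(c < n) lam).
  apply: eq_bigr => i _; apply: eq_bigr => c _.
  by have /matrixP/(_ c c) := Plam i; rewrite !mxE eqxx.
by rewrite !sumr_const !card_ord -mulrnA mulr_natr mulnC.
Qed.

End InducedSubrep.

Theorem proposition16 (C : numClosedFieldType) (gT : finGroupType)
    (G H : {group gT}) (n k : nat) (rY : gT -> 'M[C]_n) (t : 'I_k -> gT)
    (i0 : 'I_k) (m : nat) (U : 'M[C]_(m, k * n)) (psi : 'M[C]_(k, n)) :
  H \subset G ->
  unitary_rep H rY ->
  irreducible_rep H rY ->
  left_transversal G H t ->
  (1 \in t i0 *: H)%g ->
  ind_subrep G H t rY U ->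
  (mxvec psi <= U)%MS ->
  hdot psi psi = 1 ->
  hdot psi (block_proj i0 psi) <= (\rank U)%:R / (k * n)%:R.
Proof.
(* The block t_i0 need not represent the trivial coset. *)
move=> HG rY_unitary rY_irr t_transversal _ U_subrep psiU psi_unit.
have [lam Plam] :=
  diag_block_orthoproj HG rY_unitary rY_irr t_transversal U_subrep i0.
have kn_gt0 : (0 < k * n)%N.
  by rewrite muln_gt0; case: rY_irr => -> _; case: (k) i0 => [[]|].
have lamE : lam = (\rank U)%:R / (k * n)%:R.
  by rewrite (rank_subrep Plam) mulfK // pnatr_eq0 -lt0n.
have psi_neq0 : mxvec psi != 0.
  apply/eqP => psi0; move/eqP: psi_unit.
  by rewrite hdot_sqnorm psi0 /sqnorm mul0mx mxE eq_sym oner_eq0.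
have rankU_gt0 : (0 < \rank U)%N.
  by apply: leq_trans (mxrankS psiU); rewrite rank_rV psi_neq0.
have lam_gt0 : 0 < lam by rewrite lamE divr_gt0 ?ltr0n.
rewrite -lamE hdot_block_proj -[lam]mulr1 -psi_unit hdot_sqnorm.
apply: hermitian_idempotent_bound lam_gt0 (orthoproj_fix psiU).
- exact: orthoproj_idem.
- exact: orthoproj_adj.
- exact: block_projmx_adj.
- exact: block_compression (Plam i0).
Qed.
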